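(* Let $f:[0,\infty)\to\mathbb{R}$ be convex with $f(1)=0$ and $G:[0,\mathsf{D_m}(f))\to[0,\infty)$ non-decreasing with $G(0)=0$. Let $W_{Y|X}$ be a channel between finite alphabets $\mathcal{X},\mathcal{Y}$ that is permutation invariant, i.e., for every permutation $\pi$ of $\mathcal{X}$ there is a permutation $\pi'$ of $\mathcal{Y}$ with $W_{Y|X}(\pi'(y)|\pi(x))=W_{Y|X}(y|x)$ for all $x,y$. Then the uniform distribution on $\mathcal{X}$ maximizes $p_X\mapsto I_{G,f}(X;Y)$, where $Y$ is the output of $W_{Y|X}$ with input $X\sim p_X$.
   Context: For distributions $p\ll q$ on a finite set, $D_f(p\|q)=\sum_y q(y) f(p(y)/q(y))$ with $0f(0/0)=0$; $\mathsf{D_m}(f)=f(0)+\lim_{t\to\infty}f(t)/t$. $I_{G,f}(X;Y)=\min_{q_Y}\sum_x p_X(x)\,G(D_f(W_{Y|X=x}\|q_Y))$. *)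

From HB Require Import structures.
From mathcomp Require Import all_boot all_order all_algebra all_fingroup.
From mathcomp Require Import all_classical all_reals all_analysis.
Set Implicit Arguments. Unset Strict Implicit. Unset Printing Implicit Defensive.
Import Order.TTheory GRing.Theory Num.Theory.
Local Open Scope classical_set_scope.
Local Open Scope ring_scope.

Section Defs.
Variable R : realType.

Definition is_dist (T : finType) (p : T -> R) : Prop :=
  (forall t, 0 <= p t) /\ \sum_(t : T) p t = 1.

Definition convex_on_nonneg (f : R -> R) : Prop :=
  forall x y l, 0 <= x -> 0 <= y -> 0 <= l <= 1 ->
    f (l * x + (1 - l) * y) <= l * f x + (1 - l) * f y.

Definition Dm (f : R -> R) : \bar R :=
  ((f 0)%:E + lim (((f t / t)%:E) @[t --> +oo%R]))%E.

(* D_f(p || q) = sum_y q(y) f(p(y)/q(y)) when p << q (with 0 f(0/0) = 0),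
   and +oo when p is not absolutely continuous w.r.t. q *)
Definition Df (T : finType) (f : R -> R) (p q : T -> R) : \bar R :=
  if [forall t, (q t == 0) ==> (p t == 0)]
  then (\sum_(t : T) q t * f (p t / q t))%:E
  else +oo%E.

Definition Gbar (G : R -> R) (d : \bar R) : \bar R :=
  match d with
  | EFin r => (G r)%:E
  | +oo%E => +oo%E
  | -oo%E => -oo%E
  end.

Definition IGf (X Y : finType) (G f : R -> R) (W : X -> Y -> R) (p : X -> R)
  : \bar R :=
  ereal_inf [set (\sum_(x : X) (p x)%:E * Gbar G (Df f (W x) q))%E
            | q in [set q : Y -> R | is_dist q]].

Definition uniform_dist (T : finType) : T -> R := fun _ => (#|T|%:R)^-1.

End Defs.

From HB Require Import structures.
From mathcomp Require Import all_boot all_order all_algebra all_fingroup.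
From mathcomp Require Import all_classical all_reals all_analysis.
Import Order.TTheory GRing.Theory Num.Theory.
Local Open Scope ring_scope.

(* Fix an output
   distribution q and let g x := G (D_f (W x || q)).  Averaged over all
   permutations s of X, the p-weighted sum of g (s x) equals the uniform
   average of g, so some s does at least as well as the uniform input.
   Invariance turns s into a permutation s' of Y with
   D_f (W (s x) || q) = D_f (W x || q o s'), so the objective of p at the
   distribution q o s' is at most the objective of the uniform input at q. *)

Lemma sum_perm_eval {V : nmodType} {X : finType} (g : X -> V) (x : X) :
  (\sum_(s : {perm X}) g (s x)) *+ #|X| = (\sum_y g y) *+ #|{perm X}|.
Proof.
have eval_indep y : \sum_(s : {perm X}) g (s x) = \sum_(s : {perm X}) g (s y).
  rewrite (reindex_inj (mulgI (tperm y x))) /=.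
  by apply: eq_bigr => s _; rewrite permM tpermR.
transitivity (\sum_(y : X) \sum_(s : {perm X}) g (s y)).
  by rewrite -sumr_const; apply: eq_bigr => y _; apply: eval_indep.
rewrite exchange_big -sumr_const /=; apply: eq_bigr => s _.
by rewrite [RHS](reindex_inj (@perm_inj _ s)).
Qed.

Lemma exists_le_mean {R : realDomainType} {I : finType} (i0 : I) (F : I -> R) :
  exists i, F i *+ #|I| <= \sum_j F j.
Proof.
case: (arg_minP F (isT : xpredT i0)) => i _ F_min.
by exists i; rewrite -sumr_const; apply: ler_sum => j _; apply: F_min.
Qed.

Lemma exists_perm_weighted_le_mean {R : realFieldType} {X : finType}
    (g : X -> R) {p : X -> R} :
  \sum_x p x = 1 ->
  exists s : {perm X}, \sum_x p x * g (s x) <= (\sum_x g x) / #|X|%:R.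
Proof.
move=> p1.
case: (pickP (fun x : X => true)) => [x0 _|X_empty]; last first.
  by move: p1; rewrite big_pred0 // => /eqP; rewrite eq_sym oner_eq0.
have X_neq0 : #|X|%:R != 0 :> R.
  by rewrite pnatr_eq0 -lt0n; apply/card_gt0P; exists x0.
have perm_gt0 : (0 < #|{perm X}|)%N by apply/card_gt0P; exists 1%g.
have eval_mean x :
    \sum_(s : {perm X}) g (s x) = ((\sum_y g y) / #|X|%:R) *+ #|{perm X}|.
  by rewrite -mulrnAl -(sum_perm_eval g x) -[_ *+ #|X|]mulr_natr mulfK.
have [s s_min] := exists_le_mean 1%g (fun s : {perm X} => \sum_x p x * g (s x)).
exists s; rewrite -(ler_pMn2r perm_gt0) (le_trans s_min) // exchange_big /=.
under eq_bigr do rewrite -mulr_sumr eval_mean.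
by rewrite -mulr_suml p1 mul1r.
Qed.

Section FDivergence.
Context {R : realType} {Y : finType} (f : R -> R).

Lemma Df_comp_perm {w w' : Y -> R} (q : Y -> R) {s : {perm Y}} :
  (forall y, w' (s y) = w y) -> Df f w (q \o s) = Df f w' q.
Proof.
move=> ws; rewrite /Df.
have -> : [forall t, ((q \o s) t == 0) ==> (w t == 0)] =
          [forall t, (q t == 0) ==> (w' t == 0)].
  apply/forallP/forallP => abs_cont t.
    by have := abs_cont (s^-1 t)%g; rewrite /= permKV -ws permKV.
  by have := abs_cont (s t); rewrite /= ws.
case: ifP => // _; congr EFin.
by rewrite [RHS](reindex_inj (@perm_inj _ s)); apply: eq_bigr => y _ /=; rewrite ws.
Qed.

Lemma is_dist_comp_perm {q : Y -> R} (s : {perm Y}) :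
  is_dist q -> is_dist (q \o s).
Proof.
by case=> q_ge0 q1; split=> [y|]; [apply: q_ge0 | rewrite (reindex_perm s) in q1].
Qed.

Lemma Df_neqNy (w q : Y -> R) : Df f w q != -oo%E.
Proof. by rewrite /Df; case: ifP. Qed.

End FDivergence.

Lemma Gbar_fin_num {R : realType} (G : R -> R) (d : \bar R) :
  d \is a fin_num -> Gbar G d = (G (fine d))%:E.
Proof. by case: d. Qed.

Lemma Gbar_neqNy {R : realType} (G : R -> R) (d : \bar R) :
  d != -oo%E -> Gbar G d != -oo%E.
Proof. by case: d. Qed.

Lemma sum_pos_weights_eqy {R : realDomainType} {I : finType} {c : I -> R}
    {F : I -> \bar R} (i : I) :
  (forall j, 0 < c j) -> (forall j, F j != -oo%E) -> F i = +oo%E ->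
  (\sum_j (c j)%:E * F j)%E = +oo%E.
Proof.
move=> c_gt0 F_neqNy Fi; apply/esum_eqyP.
  move=> j _; have := F_neqNy j; case: (F j) => [r|_|//] //.
  by rewrite gt0_muley ?lte_fin.
by exists i; rewrite Fi gt0_muley ?lte_fin ?mem_index_enum.
Qed.

Theorem proposition1 (R : realType) (X Y : finType)
  (f : R -> R) (G : R -> R) (W : X -> Y -> R) :
  convex_on_nonneg f ->
  f 1 = 0 ->
  (forall s t, 0 <= s -> s <= t -> (t%:E < Dm f)%E -> G s <= G t) ->
  (forall t, 0 <= t -> (t%:E < Dm f)%E -> 0 <= G t) ->
  G 0 = 0 ->
  (forall x, is_dist (W x)) ->
  (forall pi : {perm X}, exists pi' : {perm Y},
      forall x y, W (pi x) (pi' y) = W x y) ->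
  forall p : X -> R, is_dist p ->
    (IGf G f W p <= IGf G f W (@uniform_dist R X))%E.
Proof.
move=> _ _ _ _ _ _ W_inv p [_ p1].
apply/ereal_infP => _ [q q_dist <-].
have [[z Df_z]|Df_fin] := pselect (exists z, Df f (W z) q = +oo%E).
  rewrite (sum_pos_weights_eqy z) ?leey // => [x|x|]; last by rewrite Df_z.
    by rewrite /uniform_dist invr_gt0 ltr0n; apply/card_gt0P; exists z.
  exact/Gbar_neqNy/Df_neqNy.
pose g x := G (fine (Df f (W x) q)).
have Gbar_g x : Gbar G (Df f (W x) q) = (g x)%:E.
  apply: Gbar_fin_num; rewrite fin_numE Df_neqNy /=.
  by apply/eqP => Dx; apply: Df_fin; exists x.
have [s s_le] := exists_perm_weighted_le_mean g p1.
have [s' Ws'] := W_inv s.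
apply: (@le_trans _ _ (\sum_x (p x)%:E * Gbar G (Df f (W x) (q \o s')))%E).
  by apply: ereal_inf_lbound; exists (q \o s'); first exact: is_dist_comp_perm.
have -> : (\sum_x (p x)%:E * Gbar G (Df f (W x) (q \o s')))%E =
          (\sum_x p x * g (s x))%:E.
  by rewrite -sumEFin; apply: eq_bigr => x _; rewrite (Df_comp_perm f q (Ws' x)) Gbar_g.
have -> : (\sum_x (@uniform_dist R X x)%:E * Gbar G (Df f (W x) q))%E =
          ((\sum_x g x) / #|X|%:R)%:E.
  by rewrite mulr_suml -sumEFin; apply: eq_bigr => x _; rewrite Gbar_g mulrC.
by rewrite lee_fin.
Qed.
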